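(* Let $X$ be a Banach space, $B$ an admissible Banach sequence space over $\mathbb{Z}$, and $(A_n)_{n\in\mathbb{Z}}$ a sequence of invertible bounded linear operators on $X$ with $\sup_n\lVert A_n\rVert<\infty$ admitting an exponential dichotomy. Then the linear system $x_{n+1}=A_nx_n$, $n\in\mathbb{Z}$, has the $B$-Lipschitz shadowing property: there is $L>0$ such that for every $\varepsilon>0$ and every sequence $(y_n)_{n\in\mathbb{Z}}\subset X$ with $(y_{n+1}-A_ny_n)_{n\in\mathbb{Z}}\in X_B$ and $\lVert(y_{n+1}-A_ny_n)_{n\in\mathbb{Z}}\rVert_B\le L\varepsilon$, there exists $(x_n)_{n\in\mathbb{Z}}$ with $x_{n+1}=A_nx_n$ for all $n$, $(x_n-y_n)_{n\in\mathbb{Z}}\in X_B$ and $\lVert(x_n-y_n)_{n\in\mathbb{Z}}\rVert_B\le\varepsilon$. Furthermore, for each $\varepsilon>0$, the sequence $(x_n)_{n\in\mathbb{Z}}$ satisfying $x_{n+1}=A_nx_n$ for all $n$ and $\lVert(x_n-y_n)_{n\in\mathbb{Z}}\rVert_B\le\varepsilon$ is unique.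
   Context: A normed sequence space over $\mathbb{Z}$ is a linear subspace $B$ of the space of real sequences $\mathbf s=(s_n)_{n\in\mathbb{Z}}$ with a norm $\lVert\cdot\rVert_B$ such that if $\mathbf s'\in B$ and $|s_n|\le|s'_n|$ for all $n$ then $\mathbf s\in B$ and $\lVert\mathbf s\rVert_B\le\lVert\mathbf s'\rVert_B$; a Banach sequence space if complete. Admissible: each $\chi_{\{n\}}\in B$ with $\lVert\chi_{\{n\}}\rVert_B>0$, and $B$ is invariant under shifts $(s_n)\mapsto(s_{n+m})$ with equal norms; assume $\lVert\chi_{\{0\}}\rVert_B=1$. $X_B$ is the set of sequences $(x_n)\subset X$ with $(\lVert x_n\rVert)\in B$, normed by $\lVert\mathbf x\rVert_B=\lVert(\lVert x_n\rVert)_n\rVert_B$. Exponential dichotomy: with $\mathcal A(m,n)=A_{m-1}\cdots A_n$ ($m>n$), $\mathrm{Id}$ ($m=n$), $A_m^{-1}\cdots A_{n-1}^{-1}$ ($m<n$), there exist projections $P_m$ with $P_{m+1}A_m=A_mP_m$ and $C,\lambda>0$ with $\lVert\mathcal A(m,n)P_n\rVert\le Ce^{-\lambda(m-n)}$ ($m\ge n$) and $\lVert\mathcal A(m,n)(\mathrm{Id}-P_n)\rVert\le Ce^{-\lambda(n-m)}$ ($m\le n$). *)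

From HB Require Import structures.
From mathcomp Require Import all_boot all_order all_algebra.
From mathcomp Require Import all_classical all_reals all_analysis.
Set Implicit Arguments. Unset Strict Implicit. Unset Printing Implicit Defensive.
Import Order.TTheory GRing.Theory Num.Theory.
Import numFieldNormedType.Exports.
Local Open Scope ring_scope.

(* Real sequences indexed by Z are functions int -> R.
   A normed sequence space is given by a carrier predicate B and a
   function normB, meaningful on B. *)

Definition is_linear_op (R : realType) (X : normedModType R) (T : X -> X) :=
  forall (a : R) (x y : X), T (a *: x + y) = a *: T x + T y.

Definition is_bounded_op (R : realType) (X : normedModType R) (T : X -> X) :=
  exists M : R, forall x : X, `|T x| <= M * `|x|.

Definition normed_seq_space (R : realType) (B : set (int -> R))
    (normB : (int -> R) -> R) :=
  [/\
      (B (fun _ => 0) /\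
      (forall s t, B s -> B t -> B (fun n => s n + t n)) /\
      (forall (c : R) s, B s -> B (fun n => c * s n))),
      (forall s t, B s -> B t -> normB (fun n => s n + t n) <= normB s + normB t),
      (forall (c : R) s, B s -> normB (fun n => c * s n) = `|c| * normB s),
      (forall s, B s -> normB s = 0 -> s = (fun _ => 0)) &
      (forall s s', B s' -> (forall n, `|s n| <= `|s' n|) ->
         B s /\ normB s <= normB s')].

Definition seq_space_complete (R : realType) (B : set (int -> R))
    (normB : (int -> R) -> R) :=
  forall u : nat -> (int -> R), (forall k, B (u k)) ->
    (forall e : R, 0 < e -> exists N : nat, forall k l : nat, (N <= k)%N -> (N <= l)%N ->
        normB (fun n => u k n - u l n) < e) ->
    exists s, B s /\ forall e : R, 0 < e -> exists N : nat, forall k : nat, (N <= k)%N ->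
        normB (fun n => u k n - s n) < e.

Definition banach_seq_space (R : realType) (B : set (int -> R))
    (normB : (int -> R) -> R) :=
  normed_seq_space B normB /\ seq_space_complete B normB.

Definition chi1 (R : realType) (m : int) : int -> R :=
  fun n => if n == m then 1 else 0.

Definition admissible (R : realType) (B : set (int -> R))
    (normB : (int -> R) -> R) :=
  [/\ (forall m, B (chi1 R m) /\ 0 < normB (chi1 R m)),
      (forall s (m : int), B s -> B (fun n => s (n + m)) /\
                             normB (fun n => s (n + m)) = normB s) &
      normB (chi1 R 0) = 1].

(* X_B membership of an X-valued sequence, via the sequence of norms *)
Definition inXB (R : realType) (X : normedModType R) (B : set (int -> R))
    (x : int -> X) := B (fun n => `|x n|).
Definition normXB (R : realType) (X : normedModType R)
    (normB : (int -> R) -> R) (x : int -> X) := normB (fun n => `|x n|).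

Fixpoint fwd_prod (R : realType) (X : normedModType R) (A : int -> X -> X)
    (k : nat) (n : int) : X -> X :=
  match k with
  | 0%N => id
  | k'.+1 => fun x => A (n + k'%:Z) (fwd_prod A k' n x)
  end.
Fixpoint bwd_prod (R : realType) (X : normedModType R) (Ainv : int -> X -> X)
    (k : nat) (n : int) : X -> X :=
  match k with
  | 0%N => id
  | k'.+1 => fun x => Ainv (n - k'.+1%:Z) (bwd_prod Ainv k' n x)
  end.
Definition cocycle (R : realType) (X : normedModType R) (A Ainv : int -> X -> X)
    (m n : int) : X -> X :=
  if n <= m then fwd_prod A (absz (m - n)) n else bwd_prod Ainv (absz (n - m)) n.

Definition exp_dichotomy (R : realType) (X : normedModType R) (A Ainv : int -> X -> X) :=
  exists (P : int -> X -> X) (C lam : R),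
    [/\ (forall n, is_linear_op (P n) /\ is_bounded_op (P n) /\
                   (forall x, P n (P n x) = P n x)),
        (forall m x, P (m + 1) (A m x) = A m (P m x)),
        0 < C /\ 0 < lam,
        (forall m n x, n <= m ->
            `|cocycle A Ainv m n (P n x)| <= C * expR (- lam * (m - n)%:~R) * `|x|) &
        (forall m n x, m <= n ->
            `|cocycle A Ainv m n (x - P n x)| <= C * expR (- lam * (n - m)%:~R) * `|x|)].

(* Write g n := y (n + 1) - A n (y n).  The dichotomy provides the discrete Green function
   solution of z (n + 1) = A n z n + g n,
     z n = sum_(j >= 0) A(n, n-j) P(n-j) g(n-j-1) - sum_(j >= 0) A(n, n+j+1) (Id - P(n+j+1)) g(n+j),
   whose j-th terms are bounded by C q^j |g(n-j-1)| and C q^j |g(n+j)| with q = e^(-lam).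
   Hence |z| is dominated by C times a geometrically weighted series of shifts of |g|, which
   converges in the Banach sequence space B to an element of norm at most 2 |g|_B / (1 - q);
   the shadowing orbit is x := y - z.  For uniqueness, the difference of two such orbits is a
   solution that is bounded, because the norm of B dominates the sup norm; running the
   dichotomy estimates k steps forwards and backwards bounds it by 2 C q^k sup |w| for all k. *)

From HB Require Import structures.
From mathcomp Require Import all_boot all_order all_algebra.
From mathcomp Require Import all_classical all_reals all_analysis.
From mathcomp Require Import zify ring lra.
Set Implicit Arguments. Unset Strict Implicit. Unset Printing Implicit Defensive.
Import Order.TTheory GRing.Theory Num.Theory.
Import numFieldNormedType.Exports.
Local Open Scope ring_scope.
Local Open Scope classical_set_scope.

Section LinearOperator.
Variables (R : realType) (X : normedModType R) (T : X -> X).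
Hypothesis linT : is_linear_op T.

Lemma lin_opD x y : T (x + y) = T x + T y.
Proof. by rewrite -[x in LHS]scale1r linT scale1r. Qed.

Lemma lin_op0 : T 0 = 0.
Proof. by apply: (addrI (T 0)); rewrite -lin_opD !addr0. Qed.

Lemma lin_opB x y : T (x - y) = T x - T y.
Proof. by apply/eqP; rewrite eq_sym subr_eq -lin_opD subrK. Qed.

Lemma lin_op_sum I (r : seq I) (F : I -> X) :
  T (\sum_(i <- r) F i) = \sum_(i <- r) T (F i).
Proof. exact: (big_morph T lin_opD lin_op0). Qed.

Lemma bounded_lin_op_continuous : is_bounded_op T -> continuous T.
Proof.
move=> [M TM] x; apply/cvgrPdist_lt => e e0.
have M1 : 0 < `|M| + 1 by rewrite ltr_pwDr.
near=> y; rewrite -lin_opB; apply: le_lt_trans (TM _) _.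
apply: (@le_lt_trans _ _ ((`|M| + 1) * `|x - y|)).
  by rewrite ler_wpM2r // (le_trans (ler_norm M)) // lerDl.
rewrite mulrC -ltr_pdivlMr //; near: y.
by apply: cvgr_dist_lt; [exact: cvg_id | exact: divr_gt0].
Unshelve. all: by end_near. Qed.

End LinearOperator.

Lemma le0_geometric_bound (R : realType) (x K q : R) :
  `|q| < 1 -> (forall k, x <= K * q ^+ k) -> x <= 0.
Proof.
move=> q1 xK; apply: (ler_cvg_to (cvg_cst x) (cvg_geometric K q1)).
exact: nearW.
Qed.

Lemma cvg_series_geometric_dominated (R : realType) (V : completeNormedModType R)
    (u : nat -> V) (K q : R) :
  `|q| < 1 -> (forall j, `|u j| <= K * q ^+ j) -> cvgn (series u).
Proof.
move=> q1 uK; apply: normed_cvg.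
apply: (@series_le_cvg _ _ (geometric K q)) => // [j|j|].
- exact: normr_ge0.
- exact: le_trans (uK j).
- exact: is_cvg_geometric_series.
Qed.

Section SequenceSpace.
Variables (R : realType) (B : set (int -> R)) (normB : (int -> R) -> R).
Hypothesis hB : normed_seq_space B normB.

Lemma memB0 : B (fun _ => 0).
Proof. by case: hB => [[]]. Qed.

Lemma memBD s t : B s -> B t -> B (fun n => s n + t n).
Proof. by case: hB => [[_ [memD _]]] _ _ _ _; apply: memD. Qed.

Lemma memBZ c s : B s -> B (fun n => c * s n).
Proof. by case: hB => [[_ [_ memZ]]] _ _ _ _; apply: memZ. Qed.

Lemma ler_normBD s t : B s -> B t -> normB (fun n => s n + t n) <= normB s + normB t.
Proof. by case: hB => _ normD _ _ _; apply: normD. Qed.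

Lemma normBZ c s : B s -> normB (fun n => c * s n) = `|c| * normB s.
Proof. by case: hB => _ _ normZ _ _; apply: normZ. Qed.

Lemma solidB s s' : B s' -> (forall n, `|s n| <= `|s' n|) -> B s /\ normB s <= normB s'.
Proof. by case: hB => _ _ _ _; apply. Qed.

Lemma memBN s : B s -> B (fun n => - s n).
Proof. by move=> /(memBZ (-1)); under eq_fun do rewrite mulN1r. Qed.

Lemma memBB s t : B s -> B t -> B (fun n => s n - t n).
Proof. by move=> Bs Bt; apply: memBD => //; apply: memBN. Qed.

Lemma normBN s : B s -> normB (fun n => - s n) = normB s.
Proof.
move=> /(normBZ (-1)); under eq_fun do rewrite mulN1r.
by rewrite normrN normr1 mul1r.
Qed.

Lemma normB_sym s t : B s -> B t ->
  normB (fun n => s n - t n) = normB (fun n => t n - s n).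
Proof.
move=> Bs Bt; rewrite -[RHS]normBN; last exact: memBB.
by congr normB; apply/funext => n; rewrite opprB.
Qed.

Lemma normB0 : normB (fun _ => 0) = 0.
Proof. by have := normBZ 0 memB0; under eq_fun do rewrite mul0r; rewrite normr0 mul0r. Qed.

Lemma normB_ge0 s : B s -> 0 <= normB s.
Proof.
move=> Bs; have := ler_normBD Bs (memBN Bs); under eq_fun do rewrite subrr.
rewrite normB0 normBN //; lra.
Qed.

Lemma memB_sum I (r : seq I) (F : I -> int -> R) :
  (forall i, B (F i)) -> B (fun n => \sum_(i <- r) F i n).
Proof.
move=> BF; elim: r => [|i r IH]; first by under eq_fun do rewrite big_nil; exact: memB0.
by under eq_fun do rewrite big_cons; exact: memBD.
Qed.

Lemma ler_normB_sum I (r : seq I) (F : I -> int -> R) : (forall i, B (F i)) ->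
  normB (fun n => \sum_(i <- r) F i n) <= \sum_(i <- r) normB (F i).
Proof.
move=> BF; elim: r => [|i r IH].
  by under eq_fun do rewrite big_nil; rewrite big_nil normB0.
under eq_fun do rewrite big_cons; rewrite big_cons.
by apply: le_trans (ler_normBD (BF i) (memB_sum r BF)) _; rewrite lerD2l.
Qed.

Section Admissible.
Hypothesis hadm : admissible B normB.

Lemma memB_shift s m : B s -> B (fun n => s (n + m)).
Proof. by case: hadm => _ shift _ /(shift _ m) []. Qed.

Lemma normB_shift s m : B s -> normB (fun n => s (n + m)) = normB s.
Proof. by case: hadm => _ shift _ /(shift _ m) []. Qed.

Lemma normB_chi1 m : normB (chi1 R m) = 1.
Proof.
case: hadm => chi1B _ <-.
rewrite -[RHS](normB_shift (- m) (proj1 (chi1B 0))); congr normB; apply/funext => n.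
by rewrite /chi1 subr_eq0.
Qed.

Lemma ler_coord_normB s m : B s -> `|s m| <= normB s.
Proof.
move=> Bs; have [chi1B _] := hadm.
have le_s n : `|s m * chi1 R m n| <= `|s n|.
  by rewrite /chi1; case: eqP => [->|_]; rewrite ?mulr1 ?mulr0 ?normr0.
have [_] := solidB Bs le_s.
by rewrite normBZ ?normB_chi1 ?mulr1 //; exact: (chi1B m).1.
Qed.

Lemma ler_coord_normXB (X : normedModType R) (x : int -> X) m :
  inXB B x -> `|x m| <= normXB normB x.
Proof. by move=> /(ler_coord_normB m); rewrite normr_id. Qed.

Section Complete.
Hypothesis hcomplete : seq_space_complete B normB.

Lemma memB_cauchy_lim (u : nat -> int -> R) (b : nat -> R) :
    (forall N, B (u N)) ->
    (forall k k', (k <= k')%N -> normB (fun n => u k' n - u k n) <= b k) ->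
    b @ \oo --> 0 ->
  exists s, B s /\ forall e, 0 < e -> exists N : nat,
    forall k, (N <= k)%N -> normB (fun n => u k n - s n) < e.
Proof.
move=> Bu ub b0; apply: hcomplete => // e e0.
have [N _ Nb] := cvgr_dist_lt _ _ b0 _ e0.
exists N => k k'; wlog kk' : k k' / (k' <= k)%N.
  move=> wlog_kk' kN k'N; have [/wlog_kk'|/ltnW /wlog_kk'] := leqP k' k; first exact.
  by rewrite normB_sym //; apply.
move=> _ /Nb; rewrite sub0r normrN => bk'.
exact: le_lt_trans (ub _ _ kk') (le_lt_trans (ler_norm _) bk').
Qed.

Lemma memB_series (F : nat -> int -> R) (c : nat -> R) (l : R) :
  (forall j, B (F j)) -> (forall j, normB (F j) <= c j) -> series c @ \oo --> l ->
  exists2 s, B s /\ normB s <= l & forall n, series (F ^~ n) @ \oo --> s n.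
Proof.
move=> BF Fc cl.
pose u N n := series (F ^~ n) N.
have Bu N : B (u N) by exact: memB_sum.
have series_le N : series c N <= l.
  rewrite -(cvg_lim _ cl) //; apply: nondecreasing_cvgn_le; last by apply/cvg_ex; exists l.
  by apply: nondecreasing_series => j _ _; exact: le_trans (normB_ge0 (BF j)) (Fc j).
have normBu N : normB (u N) <= series c N.
  by apply: le_trans (ler_normB_sum _ BF) _; apply: ler_sum => j _; exact: Fc.
have tail k k' : (k <= k')%N -> normB (fun n => u k' n - u k n) <= l - series c k.
  move=> kk'; have -> : (fun n => u k' n - u k n) = fun n => \sum_(k <= j < k') F j n.
    by apply/funext => n; rewrite /u sub_series_geq.
  apply: le_trans (ler_normB_sum _ BF) _.
  apply: (@le_trans _ _ (\sum_(k <= j < k') c j)); first by apply: ler_sum => j _.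
  by rewrite -sub_series_geq // lerD2r.
have tail0 : (fun k => l - series c k) @ \oo --> 0.
  by rewrite -(subrr l); exact: cvgB (cvg_cst l) cl.
have [s [Bs us]] := memB_cauchy_lim Bu tail tail0.
exists s.
- split=> //; apply/ler_addgt0Pr => e e0; have [N /(_ N (leqnn N)) uNs] := us e e0.
  have -> : s = fun n => u N n + (- (u N n - s n)).
    by apply/funext => n; rewrite opprB addrC subrK.
  apply: le_trans (ler_normBD (Bu N) (memBN (memBB (Bu N) Bs))) _.
  rewrite normBN; last exact: memBB.
  by apply: lerD; [exact: le_trans (normBu N) (series_le N) | exact: ltW].
- move=> n; apply/cvgrPdist_lt => e e0; have [N uNs] := us e e0.
  near=> k; rewrite distrC; apply: le_lt_trans (ler_coord_normB n (memBB (Bu k) Bs)) _.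
  by apply: uNs; near: k; exact: nbhs_infty_ge.
Unshelve. all: by end_near. Qed.

Lemma memB_geometric_convolution (a : int -> R) (q : R) : B a -> 0 <= q < 1 ->
  exists2 s, B s /\ normB s <= 2 * normB a / (1 - q) &
    forall n, series (fun j => q ^+ j * (a (n - j%:Z - 1) + a (n + j%:Z))) @ \oo --> s n.
Proof.
move=> Ba /andP[q0 q1].
pose F j n := q ^+ j * (a (n + - (j%:Z + 1)) + a (n + j%:Z)).
have Ba_shifts j : B (fun n => a (n + - (j%:Z + 1)) + a (n + j%:Z)).
  by apply: memBD; exact: memB_shift.
have normF j : normB (F j) <= geometric (2 * normB a) q j.
  rewrite normBZ // ger0_norm ?exprn_ge0 //= mulrC ler_wpM2r ?exprn_ge0 //.
  apply: le_trans (ler_normBD _ _) _; try exact: memB_shift.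
  by rewrite !normB_shift // mulr2n mulrDl mul1r.
have geometric_cvg : series (geometric (2 * normB a) q) @ \oo --> 2 * normB a / (1 - q).
  by apply: cvg_geometric_series; rewrite ger0_norm.
have [s Bs F_cvg] := memB_series (fun j => memBZ _ (Ba_shifts j)) normF geometric_cvg.
exists s => // n.
suff -> : (fun j => q ^+ j * (a (n - j%:Z - 1) + a (n + j%:Z))) = F ^~ n by exact: F_cvg.
by apply/funext => j; rewrite /F opprD addrA.
Qed.

End Complete.
End Admissible.
End SequenceSpace.

Section Cocycle.
Variables (R : realType) (X : normedModType R) (A Ainv : int -> X -> X).

Lemma cocycle_fwd n (k : nat) : cocycle A Ainv (n + k%:Z) n = fwd_prod A k n.
Proof. by rewrite /cocycle lerDl addrAC subrr add0r absz_nat. Qed.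

Lemma cocycle_bwd n (k : nat) : cocycle A Ainv (n - k%:Z) n = bwd_prod Ainv k n.
Proof.
rewrite /cocycle; case: k => [|k]; first by rewrite subr0 lexx subrr.
have -> : (n <= n - k.+1%:Z) = false by lia.
by rewrite subKr.
Qed.

Lemma exp_dichotomy_geometric : exp_dichotomy A Ainv -> exists P (C q : R),
  [/\ forall m x, P (m + 1) (A m x) = A m (P m x), 0 < C, 0 <= q < 1,
      forall n k x, `|fwd_prod A k n (P n x)| <= C * q ^+ k * `|x| &
      forall n k x, `|bwd_prod Ainv k n (x - P n x)| <= C * q ^+ k * `|x|].
Proof.
move=> [P [C [lam [_ PA [C0 lam0] stable unstable]]]].
have expR_nat (k : nat) : expR (- lam * k%:R) = expR (- lam) ^+ k.
  by rewrite mulrC expRM_natl.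
exists P, C, (expR (- lam)); split => //.
- by rewrite expR_ge0 expR_lt1 oppr_lt0.
- move=> n k x; rewrite -cocycle_fwd -expR_nat.
  by have := stable (n + k%:Z) n x; rewrite lerDl addrAC subrr add0r; apply.
- move=> n k x; rewrite -cocycle_bwd -expR_nat.
  by have := unstable (n - k%:Z) n x; rewrite gerBl subKr; apply.
Qed.

End Cocycle.

Section GreenFunction.
Variables (R : realType) (X : completeNormedModType R) (A Ainv P : int -> X -> X) (C q : R).
Hypothesis linA : forall n, is_linear_op (A n).
Hypothesis boundedA : forall n, is_bounded_op (A n).
Hypothesis AinvK : forall n x, Ainv n (A n x) = x.
Hypothesis AKinv : forall n x, A n (Ainv n x) = x.
Hypothesis PA : forall m x, P (m + 1) (A m x) = A m (P m x).
Hypothesis C_ge0 : 0 <= C.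
Hypothesis q_ge0 : 0 <= q.
Hypothesis q_lt1 : q < 1.
Hypothesis stable_decay :
  forall n k x, `|fwd_prod A k n (P n x)| <= C * q ^+ k * `|x|.
Hypothesis unstable_decay :
  forall n k x, `|bwd_prod Ainv k n (x - P n x)| <= C * q ^+ k * `|x|.

Let normq_lt1 : `|q| < 1. Proof. by rewrite ger0_norm. Qed.

Let A_continuous n : continuous (A n).
Proof. exact: bounded_lin_op_continuous. Qed.

Section BoundedSolution.
Variable w : int -> X.
Hypothesis w_sol : forall n, w (n + 1) = A n (w n).

Lemma fwd_prod_stable_solution m (k : nat) :
  fwd_prod A k m (P m (w m)) = P (m + k%:Z) (w (m + k%:Z)).
Proof.
elim: k => [|k IH] /=; first by rewrite addr0.
by rewrite IH -PA -w_sol; have -> : m + k.+1%:Z = m + k%:Z + 1 by lia.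
Qed.

Lemma bwd_prod_unstable_solution m (k : nat) :
  bwd_prod Ainv k m (w m - P m (w m)) = w (m - k%:Z) - P (m - k%:Z) (w (m - k%:Z)).
Proof.
elim: k => [|k IH] /=; first by rewrite subr0.
rewrite IH; have -> : m - k%:Z = m - k.+1%:Z + 1 by lia.
by rewrite w_sol PA -lin_opB ?AinvK.
Qed.

Lemma bounded_solution_eq0 W : (forall n, `|w n| <= W) -> w = fun _ => 0.
Proof.
move=> wW; apply/funext => n; apply/eqP; rewrite -normr_le0.
apply: (le0_geometric_bound (K := 2 * C * W) normq_lt1) => k.
have Cq_ge0 : 0 <= C * q ^+ k by rewrite mulr_ge0 ?exprn_ge0.
have stable_part : `|P n (w n)| <= C * q ^+ k * W.
  have := fwd_prod_stable_solution (n - k%:Z) k; rewrite subrK => <-.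
  by apply: le_trans (stable_decay _ _ _) _; rewrite ler_wpM2l.
have unstable_part : `|w n - P n (w n)| <= C * q ^+ k * W.
  have := bwd_prod_unstable_solution (n + k%:Z) k; rewrite addrK => <-.
  by apply: le_trans (unstable_decay _ _ _) _; rewrite ler_wpM2l.
rewrite -[w n](subrK (P n (w n))); apply: le_trans (ler_normD _ _) _.
have := lerD unstable_part stable_part; lra.
Qed.

End BoundedSolution.

Definition stable_term (g : int -> X) n (j : nat) :=
  fwd_prod A j (n - j%:Z) (P (n - j%:Z) (g (n - j%:Z - 1))).

Definition unstable_term (g : int -> X) n (j : nat) :=
  bwd_prod Ainv j.+1 (n + j.+1%:Z) (g (n + j%:Z) - P (n + j.+1%:Z) (g (n + j%:Z))).

Definition green (g : int -> X) n :=
  limn (series (stable_term g n)) - limn (series (unstable_term g n)).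

Section Green.
Variables (g : int -> X) (M : R).
Hypothesis g_bounded : forall n, `|g n| <= M.

Lemma stable_term_norm n j : `|stable_term g n j| <= C * q ^+ j * `|g (n - j%:Z - 1)|.
Proof. exact: stable_decay. Qed.

Lemma unstable_term_norm n j : `|unstable_term g n j| <= C * q ^+ j * `|g (n + j%:Z)|.
Proof.
apply: le_trans (unstable_decay _ _ _) _.
by rewrite ler_wpM2r // ler_wpM2l // exprS ler_piMl ?exprn_ge0 // ltW.
Qed.

Lemma stable_termS n j : stable_term g (n + 1) j.+1 = A n (stable_term g n j).
Proof.
rewrite /stable_term /=.
have -> : n + 1 - j.+1%:Z = n - j%:Z by lia.
by rewrite subrK.
Qed.

Lemma stable_term0 n : stable_term g (n + 1) 0 = P (n + 1) (g n).
Proof. by rewrite /stable_term /= subr0 addrK. Qed.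

Lemma unstable_termS n j : A n (unstable_term g n j.+1) = unstable_term g (n + 1) j.
Proof.
rewrite /unstable_term /= addrK AKinv.
have -> : n + j.+2%:Z = n + 1 + j.+1%:Z by lia.
by have -> : n + j.+1%:Z = n + 1 + j%:Z by lia.
Qed.

Lemma unstable_term0 n : A n (unstable_term g n 0) = g n - P (n + 1) (g n).
Proof. by rewrite /unstable_term /= addrK AKinv addr0. Qed.

Lemma cvg_series_stable_term n : cvgn (series (stable_term g n)).
Proof.
apply: (cvg_series_geometric_dominated (K := C * M) normq_lt1) => j.
apply: le_trans (stable_term_norm n j) _.
by rewrite [C * M * _]mulrAC ler_wpM2l ?mulr_ge0 ?exprn_ge0.
Qed.

Lemma cvg_series_unstable_term n : cvgn (series (unstable_term g n)).
Proof.
apply: (cvg_series_geometric_dominated (K := C * M) normq_lt1) => j.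
apply: le_trans (unstable_term_norm n j) _.
by rewrite [C * M * _]mulrAC ler_wpM2l ?mulr_ge0 ?exprn_ge0.
Qed.

Lemma lim_series_stable_termS n : limn (series (stable_term g (n + 1))) =
  P (n + 1) (g n) + A n (limn (series (stable_term g n))).
Proof.
apply: cvg_lim => //; rewrite -cvg_shiftS.
have -> : [sequence series (stable_term g (n + 1)) N.+1]_N =
    fun N => P (n + 1) (g n) + A n (series (stable_term g n) N).
  apply/funext => N /=; rewrite !seriesEnat /= big_nat_recl // stable_term0.
  by rewrite (lin_op_sum (linA n)); under eq_bigr do rewrite stable_termS.
apply: cvgD; first exact: cvg_cst.
exact: continuous_cvg _ (@A_continuous n _) (@cvg_series_stable_term n).
Qed.

Lemma lim_series_unstable_termS n : A n (limn (series (unstable_term g n))) =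
  g n - P (n + 1) (g n) + limn (series (unstable_term g (n + 1))).
Proof.
have A_cvg : (A n \o series (unstable_term g n)) @ \oo -->
    A n (limn (series (unstable_term g n))).
  exact: continuous_cvg _ (@A_continuous n _) (@cvg_series_unstable_term n).
rewrite -cvg_shiftS in A_cvg.
have shiftedE : [sequence (A n \o series (unstable_term g n)) N.+1]_N =
    fun N => g n - P (n + 1) (g n) + series (unstable_term g (n + 1)) N.
  apply/funext => N /=; rewrite !seriesEnat /= big_nat_recl //.
  rewrite (lin_opD (linA n)) unstable_term0 (lin_op_sum (linA n)).
  by congr (_ + _); apply: eq_bigr => j _; rewrite unstable_termS.
rewrite shiftedE in A_cvg; apply: (cvg_unique _ A_cvg) => //=.
apply: cvgD; first exact: cvg_cst.
exact: cvg_series_unstable_term.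
Qed.

Lemma green_solution n : green g (n + 1) = A n (green g n) + g n.
Proof.
rewrite /green lim_series_stable_termS (lin_opB (linA n)) lim_series_unstable_termS.
set a := A n _; set p := P _ _.
by rewrite opprD opprB !addrA [RHS]addrAC subrK (addrC p).
Qed.

Lemma green_norm_le n r :
    series (fun j => q ^+ j * (`|g (n - j%:Z - 1)| + `|g (n + j%:Z)|)) @ \oo --> r ->
  `|green g n| <= C * r.
Proof.
move=> r_lim.
have partial_cvg : (fun N => series (stable_term g n) N - series (unstable_term g n) N)
    @ \oo --> green g n.
  by apply: cvgB; [exact: cvg_series_stable_term | exact: cvg_series_unstable_term].
apply: (ler_cvg_to (cvg_norm partial_cvg) (cvgMl_tmp (a := C) r_lim)).
apply: nearW => N.
rewrite !seriesEnat /= -sumrB mulr_sumr; apply: le_trans (ler_norm_sum _ _ _) _.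
apply: ler_sum => j _; apply: le_trans (ler_normB _ _) _.
by rewrite mulrA mulrDr; apply: lerD; [exact: stable_term_norm | exact: unstable_term_norm].
Qed.

End Green.

Variables (B : set (int -> R)) (normB : (int -> R) -> R).
Hypotheses (hB : banach_seq_space B normB) (hadm : admissible B normB).

Lemma green_memXB G : inXB B G ->
  inXB B (green G) /\ normXB normB (green G) <= 2 * C / (1 - q) * normXB normB G.
Proof.
move=> BG; have q01 : 0 <= q < 1 by rewrite q_ge0 q_lt1.
have [s [Bs s_le] s_cvg] := memB_geometric_convolution hB.1 hadm hB.2 BG q01.
have G_bounded n : `|G n| <= normXB normB G := ler_coord_normXB hB.1 hadm n BG.
have green_le n : `| `|green G n| | <= `|C * s n|.
  by rewrite normr_id; exact: le_trans (green_norm_le G_bounded (s_cvg n)) (ler_norm _).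
have [Bz normz] := solidB hB.1 (memBZ hB.1 C Bs) green_le.
split=> //; apply: le_trans normz _.
rewrite (normBZ hB.1 _ Bs) ger0_norm //; apply: le_trans (ler_wpM2l C_ge0 s_le) _.
by have -> : C * (2 * normXB normB G / (1 - q)) = 2 * C / (1 - q) * normXB normB G by ring.
Qed.

Lemma lipschitz_shadowing : exists L : R, 0 < L /\
    forall (eps : R) (y : int -> X), 0 < eps ->
      inXB B (fun n => y (n + 1) - A n (y n)) ->
      normXB normB (fun n => y (n + 1) - A n (y n)) <= L * eps ->
      exists x : int -> X,
        [/\ (forall n, x (n + 1) = A n (x n)),
            inXB B (fun n => x n - y n),
            normXB normB (fun n => x n - y n) <= eps &
            (forall x' : int -> X,
               (forall n, x' (n + 1) = A n (x' n)) ->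
               inXB B (fun n => x' n - y n) ->
               normXB normB (fun n => x' n - y n) <= eps ->
               x' = x)].
Proof.
have q1 : 0 < 1 - q by rewrite subr_gt0.
have C1 : 0 < 2 * C + 1 by apply: ltr_wpDl; rewrite ?mulr_ge0.
(* [2 * C + 1] rather than [2 * C] avoids a case split on [C = 0]. *)
exists ((1 - q) / (2 * C + 1)); split; first exact: divr_gt0.
move=> eps y eps0 BG normG; set G := fun n => y (n + 1) - A n (y n).
have [Bz normz] := green_memXB BG.
pose x n := y n - green G n.
have xyE : (fun n => `|x n - y n|) = fun n => `|green G n|.
  by apply/funext => n; rewrite /x addrAC subrr add0r normrN.
have x_sol n : x (n + 1) = A n (x n).
  rewrite /x (green_solution (fun m => ler_coord_normXB hB.1 hadm m BG)).
  by rewrite (lin_opB (linA n) (y n)) (addrC (A n _)) opprD addrA subKr.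
have Bxy : inXB B (fun n => x n - y n) by rewrite /inXB xyE.
exists x; split => //.
- rewrite /normXB xyE; apply: le_trans normz _.
  apply: le_trans (ler_wpM2l _ normG) _.
    by apply: divr_ge0; [exact: mulr_ge0 | exact: ltW].
  rewrite mulrA ler_piMl ?ltW // mulrA divfK ?gt_eqF //.
  by rewrite ltr_pdivrMr // mul1r ltrDl.
- move=> x' x'_sol Bx' normx'.
  have w_sol n : x' (n + 1) - x (n + 1) = A n (x' n - x n).
    by rewrite x'_sol x_sol (lin_opB (linA n) (x' n)).
  have w_bounded n : `|x' n - x n| <= normXB normB (fun m => x' m - y m) +
      normXB normB (fun m => x m - y m).
    have -> : x' n - x n = (x' n - y n) - (x n - y n) by rewrite (opprB (x n)) addrA subrK.
    apply: le_trans (ler_normB _ _) _.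
    apply: lerD; [exact: (ler_coord_normXB (x := fun m => x' m - y m) hB.1 hadm n Bx') |
                  exact: (ler_coord_normXB (x := fun m => x m - y m) hB.1 hadm n Bxy)].
  apply/funext => n; apply/subr0_eq.
  exact: (congr1 (fun w => w n) (bounded_solution_eq0 w_sol w_bounded)).
Qed.

End GreenFunction.

Theorem corollary3p7 (R : realType) (X : completeNormedModType R)
  (B : set (int -> R)) (normB : (int -> R) -> R)
  (A Ainv : int -> X -> X) :
  banach_seq_space B normB ->
  admissible B normB ->
  (forall n, is_linear_op (A n)) ->
  (forall n, is_linear_op (Ainv n) /\ is_bounded_op (Ainv n)) ->
  (forall n x, Ainv n (A n x) = x) ->
  (forall n x, A n (Ainv n x) = x) ->
  (exists M : R, forall n x, `|A n x| <= M * `|x|) ->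
  exp_dichotomy A Ainv ->
  exists L : R, 0 < L /\
    forall (eps : R) (y : int -> X), 0 < eps ->
      inXB B (fun n => y (n + 1) - A n (y n)) ->
      normXB normB (fun n => y (n + 1) - A n (y n)) <= L * eps ->
      exists x : int -> X,
        [/\ (forall n, x (n + 1) = A n (x n)),
            inXB B (fun n => x n - y n),
            normXB normB (fun n => x n - y n) <= eps &
            (forall x' : int -> X,
               (forall n, x' (n + 1) = A n (x' n)) ->
               inXB B (fun n => x' n - y n) ->
               normXB normB (fun n => x' n - y n) <= eps ->
               x' = x)].
Proof.
(* The inverses enter only through the identities [Ainv n \o A n = id = A n \o Ainv n]. *)
move=> hB hadm linA _ AinvK AKinv [M AM] /exp_dichotomy_geometric.
move=> [P [C [q [PA C_gt0 /andP[q_ge0 q_lt1] stable unstable]]]].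
have boundedA n : is_bounded_op (A n) by exists M; exact: AM.
exact: (lipschitz_shadowing linA boundedA AinvK AKinv PA (ltW C_gt0) q_ge0 q_lt1
  stable unstable hB hadm).
Qed.
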